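(* Let $G = (X\dot\cup Y,E)$ be a $k$-regular bipartite graph on $2n$ vertices, let $c>0$, and let $(S_1,T_1)$ and $(S_2,T_2)$ be two $c$-internal cuts. Then $d((S_1,T_1),(S_2,T_2)) \le \frac{40cn}{\log n}$ or $d((S_1,T_1),(S_2,T_2)) \ge k/10$.
   Context: A cut in $G$ is a pair $(S,T)$ with $S\subseteq X$, $T\subseteq Y$; write $S^c = X\setminus S$, $T^c=Y\setminus T$. The cross edges with respect to $(S,T)$ are the edges joining $S$ to $T^c$ or $S^c$ to $T$. A cut is $c$-internal if it has at most $4cnk/\log n$ cross edges. $d((S_1,T_1),(S_2,T_2)) = |S_1\setminus S_2|+|S_2\setminus S_1|+|T_1\setminus T_2|+|T_2\setminus T_1|$. $\log$ is the natural logarithm. *)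

From HB Require Import structures.
From mathcomp Require Import all_boot all_order all_algebra.
From mathcomp Require Import reals exp.
Set Implicit Arguments. Unset Strict Implicit. Unset Printing Implicit Defensive.
Import Order.TTheory GRing.Theory Num.Theory.
Local Open Scope ring_scope.

Definition k_regular_bip (X Y : finType) (E : X -> Y -> bool) (k : nat) : Prop :=
  (forall x : X, #|[set y : Y | E x y]| = k) /\
  (forall y : Y, #|[set x : X | E x y]| = k).

Definition cross_edges (X Y : finType) (E : X -> Y -> bool)
  (S : {set X}) (T : {set Y}) : {set X * Y} :=
  [set p : X * Y | E p.1 p.2 &&
     (((p.1 \in S) && (p.2 \notin T)) || ((p.1 \notin S) && (p.2 \in T)))].

Definition c_internal (R : realType) (X Y : finType) (E : X -> Y -> bool)
  (n k : nat) (c : R) (S : {set X}) (T : {set Y}) : Prop :=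
  (#|cross_edges E S T|%:R <= 4 * c * n%:R * k%:R / ln (n%:R : R)).

Definition cut_dist (X Y : finType) (S1 S2 : {set X}) (T1 T2 : {set Y}) : nat :=
  (#|S1 :\: S2| + #|S2 :\: S1| + #|T1 :\: T2| + #|T2 :\: T1|)%N.

From HB Require Import structures.
From mathcomp Require Import all_boot all_order all_algebra.
From mathcomp Require Import reals exp.
From mathcomp Require Import zify ring lra.

Set Implicit Arguments.
Unset Strict Implicit.
Unset Printing Implicit Defensive.
Import Order.TTheory GRing.Theory Num.Theory.

(* Put A := S1 (+) S2 and B := T1 (+) T2, so that d = |A| + |B|. An edge from A
   to Y \ B, or from X \ A to B, crosses exactly one of the two cuts, and by
   k-regularity there are at least |A|(k - |B|) + |B|(k - |A|) >= d(k - d) such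
   edges. Hence d(k - d) <= 8cnk / log n; if d < k/10 then k - d > 9k/10 and
   d <= 80cn / (9 log n). *)

Lemma card_setU_disjoint (T : finType) (A B : {set T}) :
  [disjoint A & B] -> #|A :|: B| = (#|A| + #|B|)%N.
Proof. by rewrite -(leq_card_setU A B).2 => /eqP. Qed.

Lemma card_symdiff (T : finType) (A B : {set T}) :
  #|(A :\: B) :|: (B :\: A)| = (#|A :\: B| + #|B :\: A|)%N.
Proof.
apply: card_setU_disjoint; rewrite disjoints_subset; apply/subsetP => x.
by rewrite !inE; case: (x \in A); case: (x \in B).
Qed.

Section EdgesBetween.

Variables (X Y : finType) (E : X -> Y -> bool).

Definition edges_between (A : {set X}) (B : {set Y}) : {set X * Y} :=
  [set p : X * Y | [&& E p.1 p.2, p.1 \in A & p.2 \in B]].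

Lemma card_edges_between (A : {set X}) (B : {set Y}) :
  #|edges_between A B| = (\sum_(x in A) #|[set y in B | E x y]|)%N.
Proof.
rewrite -sum1_card big_mkcond /=; under eq_bigr do rewrite inE.
rewrite -(pair_bigA _ (fun x y => if [&& E x y, x \in A & y \in B] then 1 else 0)%N).
rewrite [RHS]big_mkcond /=; apply: eq_bigr => x _.
case: (x \in A); last by rewrite big1 // => y _; rewrite andbF.
rewrite -sum1_card [RHS]big_mkcond /=; apply: eq_bigr => y _.
by rewrite !inE andbC.
Qed.

Lemma edges_between_transpose (A : {set X}) (B : {set Y}) :
  #|edges_between A B| = #|[set p : Y * X | [&& E p.2 p.1, p.1 \in B & p.2 \in A]]|.
Proof.
rewrite -(card_imset _ (can_inj (@swap_pairK X Y))).
apply: eq_card => -[y x]; rewrite [in RHS]inE /=.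
apply/imsetP/and3P => [[[x' y'] + [-> ->]] | [Eyx yB xA]].
  by rewrite inE => /and3P[].
by exists (x, y); rewrite ?inE ?Eyx ?yB ?xA.
Qed.

Lemma card_neighbours_outside (x : X) (B : {set Y}) :
  (#|[set y | E x y]| - #|B| <= #|[set y in ~: B | E x y]|)%N.
Proof.
rewrite leq_subLR; apply: leq_trans (leq_card_setU _ _).
by apply: subset_leq_card; apply/subsetP => y; rewrite !inE; case: (y \in B).
Qed.

Lemma edges_to_complement_lower_bound (k : nat) (A : {set X}) (B : {set Y}) :
  (forall x, x \in A -> k <= #|[set y | E x y]|)%N ->
  (#|A| * (k - #|B|) <= #|edges_between A (~: B)|)%N.
Proof.
move=> degA; rewrite card_edges_between -sum1_card big_distrl /=.
apply: leq_sum => x xA; rewrite mul1n.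
exact: leq_trans (leq_sub2r _ (degA x xA)) (card_neighbours_outside x B).
Qed.

End EdgesBetween.

Lemma edges_from_complement_lower_bound (X Y : finType) (E : X -> Y -> bool)
    (k : nat) (A : {set X}) (B : {set Y}) :
  (forall y, y \in B -> k <= #|[set x | E x y]|)%N ->
  (#|B| * (k - #|A|) <= #|edges_between E (~: A) B|)%N.
Proof.
move=> degB; rewrite edges_between_transpose.
exact: (@edges_to_complement_lower_bound _ _ (fun y x => E x y) k B A degB).
Qed.

Section TwoCuts.

Variables (X Y : finType) (E : X -> Y -> bool) (S1 S2 : {set X}) (T1 T2 : {set Y}).

Let A := (S1 :\: S2) :|: (S2 :\: S1).
Let B := (T1 :\: T2) :|: (T2 :\: T1).

Lemma cut_dist_symdiff : cut_dist S1 S2 T1 T2 = (#|A| + #|B|)%N.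
Proof. by rewrite /cut_dist !card_symdiff addnA. Qed.

Lemma symdiff_edges_subset_cross_edges :
  edges_between E A (~: B) :|: edges_between E (~: A) B
    \subset cross_edges E S1 T1 :|: cross_edges E S2 T2.
Proof.
apply/subsetP => -[x y]; rewrite !inE /=.
by case: (E x y) (x \in S1) (x \in S2) (y \in T1) (y \in T2) => [] [] [] [] [].
Qed.

Lemma cut_dist_mul_le_cross_edges (k : nat) : k_regular_bip E k ->
  let d := cut_dist S1 S2 T1 T2 in
  (d * (k - d) <= #|cross_edges E S1 T1| + #|cross_edges E S2 T2|)%N.
Proof.
case=> degX degY /=; rewrite cut_dist_symdiff.
have disjoint_edges :
    [disjoint edges_between E A (~: B) & edges_between E (~: A) B].
  rewrite disjoints_subset; apply/subsetP => -[x y]; rewrite !inE /=.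
  by case/and3P => _ inA _; rewrite inA andbF.
have lowA := @edges_to_complement_lower_bound _ _ E k A B
  (fun x _ => eq_leq (esym (degX x))).
have lowB := @edges_from_complement_lower_bound _ _ E k A B
  (fun y _ => eq_leq (esym (degY y))).
apply: leq_trans (leq_card_setU _ _).
apply: leq_trans (subset_leq_card symdiff_edges_subset_cross_edges).
rewrite card_setU_disjoint // mulnDl.
by apply: leq_add; [apply: leq_trans lowA | apply: leq_trans lowB];
  rewrite leq_mul2l leq_sub2l ?leq_addl ?leq_addr ?orbT.
Qed.

End TwoCuts.

Local Open Scope ring_scope.

Theorem claim2p6 (R : realType) (X Y : finType) (E : X -> Y -> bool) (n k : nat)
  (c : R) (S1 S2 : {set X}) (T1 T2 : {set Y}) :
  (1 < n)%N ->
  (#|X| + #|Y|)%N = (2 * n)%N ->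
  k_regular_bip E k ->
  0 < c ->
  c_internal E n k c S1 T1 ->
  c_internal E n k c S2 T2 ->
  ((cut_dist S1 S2 T1 T2)%:R : R) <= 40 * c * n%:R / ln (n%:R : R) \/
  ((cut_dist S1 S2 T1 T2)%:R : R) >= k%:R / 10.
Proof.
move=> n_gt1 _ regE c_gt0; rewrite /c_internal.
have := cut_dist_mul_le_cross_edges S1 S2 T1 T2 regE.
set d := cut_dist S1 S2 T1 T2; set m1 := #|_|; set m2 := #|_| => dist_cross int1 int2.
have [large | small] := leqP k (10 * d).
  by right; rewrite ler_pdivrMr // -natrM ler_nat mulnC.
left.
have k_gt0 : (0 : R) < k%:R by rewrite ltr0n (leq_ltn_trans _ small).
have {dist_cross small} : (9 * d * k <= 10 * (m1 + m2))%N by nia.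
rewrite -(ler_nat R) !natrM natrD => cross_lower.
have L_gt0 : 0 < ln (n%:R : R) by rewrite ln_gt0 // ltr1n.
set L := ln _ in L_gt0 int1 int2 *; set b := c * n%:R / L.
have b_ge0 : 0 <= b by apply: divr_ge0 (ltW L_gt0); apply: mulr_ge0 (ltW c_gt0) _.
have -> : 40 * c * n%:R / L = 40 * b by rewrite /b; ring.
have int_bound : 4 * c * n%:R * k%:R / L = 4 * k%:R * b by rewrite /b; ring.
rewrite int_bound in int1 int2.
nra.
Qed.
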